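(* Let $M\in\mathrm{GL}(2,\mathbb{Z})$ with $\det(M)=-1$. If $M$ is reversible mod $n$ for infinitely many $n\in\mathbb{N}$, then $M^2=\mathbb{1}$.
   Context: $M$ is reversible mod $n$ if there exists $R\in\mathrm{GL}(2,\mathbb{Z}/n\mathbb{Z})$ with $RMR^{-1}\equiv M^{-1}\pmod n$. *)

From mathcomp Require Import all_boot all_algebra.
Set Implicit Arguments. Unset Strict Implicit. Unset Printing Implicit Defensive.
Import GRing.Theory.
Local Open Scope ring_scope.

(* Reduction mod n of an integer matrix, as a matrix over 'Z_n (meaningful for n >= 2). *)
Definition red_mx (n : nat) (M : 'M[int]_2) : 'M['Z_n]_2 :=
  map_mx (fun z : int => z%:~R) M.

(* M (with det M = +-1, so M^{-1} is an integer matrix) is reversible mod n: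
   there is R in GL(2, Z/nZ) with R M R^{-1} = M^{-1} mod n.
   For n = 1, Z/1Z is the zero ring and every M is reversible; we also set
   n = 0 to True (irrelevant for "infinitely many n"). *)
Definition reversible_mod (n : nat) (M : 'M[int]_2) : Prop :=
  if (1 < n)%N then
    exists R : 'M['Z_n]_2,
      R \in unitmx /\ R *m red_mx n M *m invmx R = red_mx n (invmx M)
  else True.

From mathcomp Require Import all_boot all_algebra.
Import GRing.Theory Num.Theory.
Set Implicit Arguments. Unset Strict Implicit. Unset Printing Implicit Defensive.
Local Open Scope ring_scope.

(* Conjugation preserves the trace, so reversibility mod n gives
   tr M = tr M^-1 mod n.  For a 2x2 matrix with det M = -1, Cayley-Hamilton
   gives M^-1 = M - (tr M) 1, hence tr M^-1 = - tr M and n divides 2 tr M.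
   As this holds for arbitrarily large n, tr M = 0, and Cayley-Hamilton
   again gives M^2 = (tr M) M - (det M) 1 = 1. *)

Lemma Cayley_Hamilton2 (R : comNzRingType) (A : 'M[R]_2) :
  A *m A = \tr A *: A - (\det A)%:M.
Proof.
have := Cayley_Hamilton A.
rewrite -[char_poly A]coefK size_char_poly poly_def rmorph_sum.
rewrite !big_ord_recr big_ord0 /= add0r !linearZ /= !rmorphXn /= horner_mx_X.
have lead1 : (char_poly A)`_2 = 1.
  by have /monicP := char_poly_monic A; rewrite lead_coefE size_char_poly.
rewrite lead1 char_poly_det (char_poly_trace A isT) /= expr0 expr1 expr2.
rewrite mulrNN !mul1r scale1r expr2 scaleNr -scalemx1 mulmxE => CH.
by apply/eqP; rewrite -subr_eq0 opprB addrA -addrA addrC CH.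
Qed.

Lemma mxtrace_invmx2 (R : comUnitRingType) (A : 'M[R]_2) :
  A \in unitmx -> \det A * \tr (invmx A) = \tr A.
Proof.
move=> uA; have := congr1 (mulmx (invmx A)) (Cayley_Hamilton2 A).
rewrite mulKmx // mulmxBr -scalemxAr mulVmx // mul_mx_scalar.
move=> /(congr1 mxtrace); rewrite raddfB /= !mxtraceZ mxtrace1 => trA.
by apply: (addrI (\tr A)); rewrite {1}trA subrK mulr_natr mulr2n.
Qed.

Lemma mxtrace_conj (R : comUnitRingType) n (P A : 'M[R]_n) :
  P \in unitmx -> \tr (P *m A *m invmx P) = \tr A.
Proof. by move=> uP; rewrite mxtrace_mulC mulmxA mulVmx ?mul1mx. Qed.

Lemma intr_Zp_eq0 m (z : int) : (z%:~R == 0 :> 'Z_m.+2) = (m.+2 %| z)%Z.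
Proof.
have nat_eq0 k : (k%:R == 0 :> 'Z_m.+2) = (m.+2 %| k)%N.
  by rewrite -(inj_eq val_inj) /= Zp_nat.
case: z => k; first exact: nat_eq0.
by rewrite NegzE mulrNz oppr_eq0 dvdzE abszN nat_eq0.
Qed.

Lemma reversible_mod_dvdz_mxtrace m (M : 'M[int]_2) :
  reversible_mod m.+2 M -> (m.+2 %| \tr M - \tr (invmx M))%Z.
Proof.
rewrite /reversible_mod /= => -[P [uP]]; rewrite /red_mx => conjP.
by rewrite -intr_Zp_eq0 intrB -!trace_map_mx -conjP mxtrace_conj // subrr.
Qed.

Lemma dvdz_unbounded_eq0 (z : int) :
  (forall N, exists2 n, (N < n)%N & (n %| z)%Z) -> z = 0.
Proof.
move=> dvd_z; have [n lt_zn] := dvd_z `|z|%N; rewrite dvdzE /= => n_dvd_z.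
apply/eqP; rewrite -absz_eq0; apply/contraLR: lt_zn; rewrite -leqNgt -lt0n.
by move/dvdn_leq; apply.
Qed.

Theorem corollary4p12 (M : 'M[int]_2) :
  \det M = -1 ->
  (forall N : nat, exists n : nat, (N < n)%N /\ reversible_mod n M) ->
  M *m M = 1%:M.
Proof.
move=> detM revM.
have uM : M \in unitmx by rewrite unitmxE detM unitrN1.
have trMV : \tr (invmx M) = - \tr M.
  by rewrite -(mxtrace_invmx2 uM) detM mulN1r opprK.
have trM : \tr M = 0.
  suff /eqP : \tr M - \tr (invmx M) = 0.
    by rewrite trMV opprK -mulr2n mulrn_eq0 => /eqP.
  apply: dvdz_unbounded_eq0 => N.
  have [[|[|m]] [lt_Nn revMn]] // := revM N.+1.
  by exists m.+2; [exact: ltnW | exact: reversible_mod_dvdz_mxtrace].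
by rewrite Cayley_Hamilton2 trM detM scale0r sub0r raddfN opprK.
Qed.
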